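(* Let $G$ be a finitely generated group containing a finite index characteristic subgroup $H$, and let $\{s_i\}_{i=1}^{[G:H]}$ be representatives of the right cosets of $H$ (so $G=\bigcup_iHs_i$). Fix $\varphi\in\mathrm{Aut}(G)$ and $x\in G$, let $\bar\varphi$ be the automorphism of $H$ induced by $\varphi$, and let $f_{x,i}\in\mathrm{Aut}(H)$ be conjugation by $x_i=s_i\,x\,\varphi(s_i)^{-1}$. Then $$[x]_\varphi=\bigcup_{i=1}^{[G:H]}[1_H]_{f_{x,i}\circ\bar\varphi}\cdot x_i,$$ where $[1_H]_{f_{x,i}\circ\bar\varphi}=\{z\,(f_{x,i}(\bar\varphi(z)))^{-1}:z\in H\}$.
   Context: For $\psi\in\mathrm{Aut}(G)$, the $\psi$-twisted conjugacy class of $x$ is $[x]_\psi=\{z\,x\,\psi(z)^{-1}:z\in G\}$. *)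

From Stdlib Require Import List.

Record Group := {
  carrier :> Type;
  gmul : carrier -> carrier -> carrier;
  gone : carrier;
  ginv : carrier -> carrier;
  gmulA : forall a b c, gmul a (gmul b c) = gmul (gmul a b) c;
  gmul1l : forall a, gmul gone a = a;
  gmul1r : forall a, gmul a gone = a;
  gmulVl : forall a, gmul (ginv a) a = gone;
  gmulVr : forall a, gmul a (ginv a) = gone
}.

Arguments gmul {g} _ _.
Arguments gone {g}.
Arguments ginv {g} _.

Declare Scope grp_scope.
Delimit Scope grp_scope with grp.
Notation "a * b" := (gmul a b) : grp_scope.
Notation "a ^-1" := (ginv a) (at level 3, format "a ^-1") : grp_scope.
Notation "1" := gone : grp_scope.
Local Open Scope grp_scope.

Definition is_subgroup {G : Group} (H : G -> Prop) : Prop :=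
  H 1 /\ (forall a b, H a -> H b -> H (a * b)) /\ (forall a, H a -> H (a^-1)).

Definition generated {G : Group} (S : G -> Prop) (g : G) : Prop :=
  forall K : G -> Prop, is_subgroup K -> (forall s, S s -> K s) -> K g.

Definition finitely_generated (G : Group) : Prop :=
  exists l : list G, forall g : G, generated (fun s => In s l) g.

Definition is_aut {G : Group} (phi : G -> G) : Prop :=
  (forall a b, phi (a * b) = phi a * phi b) /\
  exists psi : G -> G, (forall a, psi (phi a) = a) /\ (forall a, phi (psi a) = a).

Definition characteristic {G : Group} (H : G -> Prop) : Prop :=
  is_subgroup H /\ forall psi : G -> G, is_aut psi -> forall h, H h -> H (psi h).

Definition in_rcoset {G : Group} (H : G -> Prop) (s g : G) : Prop :=
  exists h, H h /\ g = h * s.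

(* s 0, ..., s (n-1) is a complete irredundant system of representatives of the
   right cosets of H in G; in particular n = [G : H] (finite index). *)
Definition rcoset_reps {G : Group} (H : G -> Prop) (n : nat) (s : nat -> G) : Prop :=
  (forall g : G, exists i, i < n /\ in_rcoset H (s i) g) /\
  (forall i j, i < n -> j < n -> (forall g, in_rcoset H (s i) g <-> in_rcoset H (s j) g) -> i = j).

Definition twisted_class {G : Group} (psi : G -> G) (x : G) (g : G) : Prop :=
  exists z : G, g = z * x * (psi z)^-1.

Definition twisted_class_in {G : Group} (H : G -> Prop) (psi : G -> G) (y : G) (g : G) : Prop :=
  exists z : G, H z /\ g = z * y * (psi z)^-1.

Definition conj_by {G : Group} (a : G) (y : G) : G := a * y * a^-1.

(* Writing z = h s_i with h in H, multiplicativity of phi gives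
   z x phi(z)^-1 = h x_i phi(h)^-1 = h (x_i phi(h) x_i^-1)^-1 x_i,
   i.e. an element of [1]_{f_{x,i} o phi} times x_i; conversely every such
   product arises from z = h s_i. *)
Local Open Scope grp_scope.

Section GroupFacts.
Variable G : Group.

Lemma mul_eq1_inv (a b : G) : a * b = 1 -> b = a^-1.
Proof.
  intros E.
  rewrite <- (gmul1l G b), <- (gmulVl G a), <- gmulA, E, gmul1r.
  reflexivity.
Qed.

Lemma invM (a b : G) : (a * b)^-1 = b^-1 * a^-1.
Proof.
  symmetry. apply mul_eq1_inv.
  rewrite <- gmulA, (gmulA _ b), gmulVr, gmul1l, gmulVr.
  reflexivity.
Qed.

Lemma invK (a : G) : (a^-1)^-1 = a.
Proof. symmetry. apply mul_eq1_inv, gmulVl. Qed.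

Lemma mulKV (a b : G) : a * (a^-1 * b) = b.
Proof. rewrite gmulA, gmulVr, gmul1l. reflexivity. Qed.

End GroupFacts.

Ltac group_simpl :=
  repeat (rewrite <- ?gmulA;
          rewrite ?invM, ?invK, ?gmul1l, ?gmul1r, ?mulKV, ?gmulVl).

Lemma twisted_mul_left (G : Group) (phi : G -> G) :
  (forall a b, phi (a * b) = phi a * phi b) ->
  forall h a x : G, h * a * x * (phi (h * a))^-1 = h * (a * x * (phi a)^-1) * (phi h)^-1.
Proof. intros phiM h a x. rewrite phiM. group_simpl. reflexivity. Qed.

Lemma twisted_one_conj_mul (G : Group) (psi : G -> G) (h y : G) :
  h * 1 * (conj_by y (psi h))^-1 * y = h * y * (psi h)^-1.
Proof. unfold conj_by. group_simpl. reflexivity. Qed.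

Theorem mainTheorem17 (G : Group) (H : G -> Prop) (n : nat) (s : nat -> G)
  (phi : G -> G) (x : G) :
  finitely_generated G ->
  characteristic H ->
  rcoset_reps H n s ->
  is_aut phi ->
  let xi := fun i => s i * x * (phi (s i))^-1 in
  forall g : G,
    twisted_class phi x g <->
    exists i, i < n /\
      exists c, twisted_class_in H (fun z => conj_by (xi i) (phi z)) 1 c /\ g = c * xi i.
Proof.
  intros _ _ [cover _] [phiM _] xi g. split.
  - intros [z ->].
    destruct (cover z) as [i [lt_i_n [h [Hh ->]]]].
    exists i. split; [exact lt_i_n |].
    exists (h * 1 * (conj_by (xi i) (phi h))^-1). split.
    + exists h. split; [exact Hh | reflexivity].
    + rewrite twisted_one_conj_mul, twisted_mul_left by exact phiM.
      reflexivity.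
  - intros [i [_ [c [[h [_ ->]] ->]]]].
    exists (h * s i).
    rewrite twisted_one_conj_mul, twisted_mul_left by exact phiM.
    reflexivity.
Qed.
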